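(* Let $n=2d+1\ge 3$ be odd. If $X$ and $Y$ are $2\times n$ real matrices with $\Delta_{i,j}(X)>0$ and $\Delta_{i,j}(Y)>0$ for all $1\le i<j\le n$, and $\Delta_{i,j}(X)=\Delta_{i,j}(Y)$ for all $(i,j)\in O_1\cup O_d$, then $X$ and $Y$ have the same row span, i.e. $[X]=[Y]$ in $Gr^{>0}(2,n)$.
   Context: For a real $2\times n$ matrix $X$ and $1\le i<j\le n$, $\Delta_{i,j}(X)$ is the determinant of the $2\times2$ submatrix of columns $i,j$. Let $\sigma$ act on strictly increasing pairs $(i,j)$, $1\le i<j\le n$, by $\sigma(i,j)=(i+1,j+1)$ if $j<n$ and $\sigma(i,n)=(1,i+1)$. For $k\in\{1,\dots,n-1\}$, $O_k=\{\sigma^m(1,k+1): m=0,\dots,n-1\}$ (the $k$-th orbit). *)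

From HB Require Import structures.
From mathcomp Require Import all_boot all_order all_algebra.
From mathcomp Require Import reals.
Set Implicit Arguments. Unset Strict Implicit. Unset Printing Implicit Defensive.
Import Order.TTheory GRing.Theory Num.Theory.
Local Open Scope ring_scope.

(* Plücker coordinate Delta_{i,j}(X): determinant of the 2x2 submatrix on
   columns i, j (0-based ordinals; the paper's column i+1, j+1). *)
Definition pluck (R : comNzRingType) (n : nat) (X : 'M[R]_(2, n)) (i j : 'I_n) : R :=
  X 0 i * X 1 j - X 0 j * X 1 i.

(* The map sigma on 1-based strictly increasing pairs (i,j), 1 <= i < j <= n. *)
Definition sigma_pair (n : nat) (p : nat * nat) : nat * nat :=
  if (p.2 < n)%N then (p.1.+1, p.2.+1) else (1%N, p.1.+1).

Definition in_sigma_orbit (n k : nat) (p : nat * nat) : Prop :=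
  exists2 m : nat, (m < n)%N & iter m (sigma_pair n) (1%N, k.+1) = p.

From HB Require Import structures.
From mathcomp Require Import all_boot all_order all_algebra.
From mathcomp Require Import reals.
From mathcomp Require Import ring zify.
Import Order.TTheory GRing.Theory Num.Theory.
Local Open Scope ring_scope.

(* Index the columns of a 2 x n matrix cyclically by
   residues mod n, and say that X and Y "agree at distance k" when
   Delta_{i,i+k}(X) = Delta_{i,i+k}(Y) for every i (indices mod n).
   1. The orbit O_k consists exactly of the pairs at cyclic distance k, so
      the hypotheses say that X and Y agree at distances 1 and d.
   2. Since n = 2d+1, distance d is distance d+1 read backwards.
   3. The three-term Plücker relation
        D_{a,c} D_{b,e} = D_{a,b} D_{c,e} + D_{a,e} D_{b,c},
      applied to a = i-1, b = i, c = i+k, e = i+k+1, determines D_{i,i+k}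
      from distances 1, k+1, k+2 as soon as D_{a,e} != 0 (which positivity
      guarantees); descending from d+1, d we get every distance <= d+1, hence
      (by reversal) every pair: all Plücker coordinates of X and Y coincide.
   4. A 2 x n matrix with a nonzero Plücker coordinate is recovered, up to
      left multiplication by a 2 x 2 matrix, from its Plücker coordinates
      (Cramer's rule), so X and Y have the same row space. *)

Lemma pluck_anti (R : comNzRingType) n (X : 'M[R]_(2, n)) i j :
  pluck X i j = - pluck X j i.
Proof. by rewrite /pluck; ring. Qed.

Lemma plucker_rel (R : comNzRingType) n (X : 'M[R]_(2, n)) a b c e :
  pluck X a c * pluck X b e = pluck X a b * pluck X c e + pluck X a e * pluck X b c.
Proof. by rewrite /pluck; ring. Qed.

Lemma pluck_cramer (R : comNzRingType) n (X : 'M[R]_(2, n)) (r : 'I_2) a b k :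
  pluck X a b * X r k = pluck X k b * X r a + pluck X a k * X r b.
Proof.
have [->|->] : r = 0 \/ r = 1.
  by case: r => [[|[|//]]] Hr; [left | right]; apply/val_inj.
all: by rewrite /pluck; ring.
Qed.

Lemma submx_of_pluck (F : fieldType) n (X Y : 'M[F]_(2, n)) (a b : 'I_n) :
  (forall i j, pluck X i j = pluck Y i j) -> pluck X a b != 0 -> (Y <= X)%MS.
Proof.
move=> samePl nz.
set p := pluck X a b in nz.
pose G : 'M[F]_2 := \matrix_(r, s)
  (if s == 0 then (Y r a * X 1 b - Y r b * X 1 a) / p
   else (Y r b * X 0 a - Y r a * X 0 b) / p).
suff -> : Y = G *m X by exact: submxMl.
apply/matrixP => r k; apply: (mulfI nz).
rewrite !mxE big_ord_recr big_ord_recr big_ord0 /= !mxE /=.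
have -> : (widen_ord (leqnSn 1) ord_max : 'I_2) = 0 by apply/val_inj.
have -> : (ord_max : 'I_2) = 1 by apply/val_inj.
rewrite /p samePl pluck_cramer -!samePl.
by move: nz; rewrite /p /pluck => nz; field.
Qed.

Lemma eqmx_of_pluck (F : fieldType) n (X Y : 'M[F]_(2, n)) (a b : 'I_n) :
  (forall i j, pluck X i j = pluck Y i j) -> pluck X a b != 0 -> (X == Y)%MS.
Proof.
move=> samePl nz; apply/andP; split; last exact: submx_of_pluck nz.
by apply: (@submx_of_pluck F n Y X a b) => //; rewrite -samePl.
Qed.

Lemma positive_pluck_neq0 {R : numDomainType} {n} (X : 'M[R]_(2, n)) :
  (forall i j : 'I_n, (i < j)%N -> 0 < pluck X i j) ->
  forall i j : 'I_n, i != j -> pluck X i j != 0.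
Proof.
move=> pos i j ne; case: (ltngtP i j) => [ij | ji | /val_inj eq_ij].
- by rewrite lt0r_neq0 ?pos.
- by rewrite pluck_anti oppr_eq0 lt0r_neq0 ?pos.
by rewrite eq_ij eqxx in ne.
Qed.

Lemma iter_sigma_shift n t a b : (b + t <= n)%N ->
  iter t (sigma_pair n) (a, b) = (a + t, b + t)%N.
Proof.
elim: t => [|t IH] le_n; first by rewrite !addn0.
rewrite iterS IH; last by lia.
by rewrite /sigma_pair /= ifT; [congr (_, _); lia | lia].
Qed.

Lemma in_sigma_orbit_dist n k i j : (0 < k < n)%N -> (i < j < n)%N ->
  (j = i + k \/ i + n = j + k)%N -> in_sigma_orbit n k (i.+1, j.+1).
Proof.
move=> /andP[k_gt0 k_lt] /andP[ij j_lt] [j_eq | wrap].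
  exists i; first by lia.
  by rewrite j_eq iter_sigma_shift; [congr (_, _); lia | lia].
exists j => //.
have split_j : j = ((j + k - n) + (n - k).-1.+1)%N by lia.
rewrite {1}split_j iterD iterS iter_sigma_shift; last by lia.
rewrite /sigma_pair /= ifF; last by lia.
by rewrite iter_sigma_shift; [congr (_, _); lia | lia].
Qed.

Section CyclicAgreement.

Context {R : idomainType} {N : nat} (X Y : 'M[R]_(2, N.+1)).

(* Nondegeneracy of X: all its Plücker coordinates at distinct columns are
   nonzero; this makes the Plücker relation solvable for one of its terms. *)
Hypothesis pluckX_neq0 : forall i j : 'I_N.+1, i != j -> pluck X i j != 0.

Definition cpluck (Z : 'M[R]_(2, N.+1)) (i j : nat) : R :=
  pluck Z (inZp i) (inZp j).

Definition agree_at (i j : nat) : Prop := cpluck X i j = cpluck Y i j.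

Definition agree_dist (k : nat) : Prop := forall i, agree_at i (i + k).

Lemma agree_at_mod i1 j1 i2 j2 :
  i1 = i2 %[mod N.+1] -> j1 = j2 %[mod N.+1] -> agree_at i1 j1 -> agree_at i2 j2.
Proof.
move=> ei ej; rewrite /agree_at /cpluck.
have -> : inZp i1 = inZp i2 :> 'I_N.+1 by apply/val_inj.
by have -> : inZp j1 = inZp j2 :> 'I_N.+1 by apply/val_inj.
Qed.

Lemma agree_at_sym i j : agree_at i j -> agree_at j i.
Proof. by rewrite /agree_at /cpluck => eq; rewrite pluck_anti eq -pluck_anti. Qed.

Lemma agree_at_ord (i j : 'I_N.+1) : pluck X i j = pluck Y i j <-> agree_at i j.
Proof. by rewrite /agree_at /cpluck !valZpK. Qed.

Lemma agree_at_plucker a b c e : (a %% N.+1 != e %% N.+1)%N ->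
  agree_at a c -> agree_at b e -> agree_at a b -> agree_at c e -> agree_at a e ->
  agree_at b c.
Proof.
rewrite /agree_at /cpluck => ne ac be ab ce ae.
have nz : pluck X (inZp a) (inZp e) != 0 by exact: pluckX_neq0.
apply: (mulfI nz); apply: (addrI (pluck X (inZp a) (inZp b) * pluck X (inZp c) (inZp e))).
by rewrite -plucker_rel ac be ab ce ae plucker_rel.
Qed.

Lemma agree_dist_down k : (k.+2 < N.+1)%N ->
  agree_dist 1 -> agree_dist k.+1 -> agree_dist k.+2 -> agree_dist k.
Proof.
move=> k_lt S1 Sk1 Sk2 i.
set a := (i + N)%N.
have shifted : agree_at a.+1 (a + k.+1).
  apply: (@agree_at_plucker a a.+1 (a + k.+1) (a + k.+2)).
  - by rewrite -[X in (X %% _ != _)%N]addn0 eqn_modDl mod0n modn_small.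
  - exact: Sk1.
  - by have := Sk1 a.+1; rewrite addSnnS.
  - by have := S1 a; rewrite addn1.
  - by have := S1 (a + k.+1); rewrite addn1 -addnS.
  - exact: Sk2.
apply: agree_at_mod shifted.
  by rewrite /a -addnS modnDr.
by rewrite /a (_ : i + N + k.+1 = i + k + N.+1)%N ?modnDr //; lia.
Qed.

Lemma agree_dist_compl k : (k <= N.+1)%N -> agree_dist k -> agree_dist (N.+1 - k).
Proof.
move=> k_le Sk i; apply: agree_at_sym.
apply: (@agree_at_mod (i + (N.+1 - k)) (i + (N.+1 - k) + k)) => //.
by rewrite -addnA subnK // modnDr.
Qed.

Lemma agree_dist_upto m : (m.+1 < N.+1)%N ->
  agree_dist 1 -> agree_dist m -> agree_dist m.+1 ->
  forall k, (k <= m.+1)%N -> agree_dist k.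
Proof.
move=> m_lt S1 Sm Sm1.
have pairs t : (t <= m)%N -> agree_dist (m - t) /\ agree_dist (m.+1 - t).
  elim: t => [|t IH] t_le; first by rewrite !subn0.
  have [Smt Smt1] := IH (ltnW t_le).
  split; last by rewrite subSS.
  rewrite (_ : m - t = (m - t.+1).+1)%N in Smt; last by lia.
  rewrite (_ : m.+1 - t = (m - t.+1).+2)%N in Smt1; last by lia.
  by apply: agree_dist_down; first lia.
move=> k; rewrite leq_eqVlt => /orP[/eqP-> // | k_le].
by have := (pairs (m - k)%N (leq_subr _ _)).1; rewrite subKn.
Qed.

Lemma pluck_agree_of_dist m : (N.+1 <= m.*2)%N ->
  (forall k, (k <= m)%N -> agree_dist k) ->
  forall i j : 'I_N.+1, pluck X i j = pluck Y i j.
Proof.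
move=> n_le Sle.
have Sall k : (k <= N.+1)%N -> agree_dist k.
  move=> k_le; have [k_small | k_big] := leqP k m; first exact: Sle.
  rewrite -(subKn k_le); apply: agree_dist_compl; first exact: leq_subr.
  by apply: Sle; lia.
have ord_le (i j : 'I_N.+1) : (i <= j)%N -> agree_at i j.
  by move=> ij; rewrite -(subnKC ij); apply: Sall; have := ltn_ord j; lia.
move=> i j; apply/agree_at_ord.
by case: (leqP i j) => [ij | /ltnW ji]; [exact: ord_le | apply/agree_at_sym/ord_le].
Qed.

Lemma agree_dist_of_orbit k : (0 < k < N.+1)%N ->
  (forall i j : 'I_N.+1, (i < j)%N -> in_sigma_orbit N.+1 k (i.+1, j.+1) ->
     pluck X i j = pluck Y i j) ->
  agree_dist k.
Proof.
move=> /andP[k_gt0 k_lt] onOrbit i.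
have r_lt : (i %% N.+1 < N.+1)%N by rewrite ltn_mod.
set r := (i %% N.+1)%N in r_lt.
apply: (@agree_at_mod r (r + k)); [by rewrite modn_mod | by rewrite modnDml |].
have [rk_lt | rk_ge] := ltnP (r + k) N.+1.
  apply/(agree_at_ord (Ordinal r_lt) (Ordinal rk_lt))/onOrbit => /=; first lia.
  by apply: in_sigma_orbit_dist; lia.
have s_lt : (r + k - N.+1 < N.+1)%N by lia.
apply: (@agree_at_mod r (r + k - N.+1)) => //; first by rewrite -{2}(subnK rk_ge) modnDr.
apply/agree_at_sym/(agree_at_ord (Ordinal s_lt) (Ordinal r_lt))/onOrbit => /=; first lia.
by apply: in_sigma_orbit_dist; lia.
Qed.

End CyclicAgreement.

Theorem mainTheorem6 (R : realType) (d : nat) (X Y : 'M[R]_(2, d.*2.+1)) :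
  (1 <= d)%N ->
  (forall i j : 'I_(d.*2.+1), (i < j)%N -> 0 < pluck X i j) ->
  (forall i j : 'I_(d.*2.+1), (i < j)%N -> 0 < pluck Y i j) ->
  (forall i j : 'I_(d.*2.+1), (i < j)%N ->
     in_sigma_orbit (d.*2.+1)%N 1 (i.+1, j.+1) \/ in_sigma_orbit (d.*2.+1)%N d (i.+1, j.+1) ->
     pluck X i j = pluck Y i j) ->
  (X == Y)%MS.
Proof.
move=> d_ge1 posX _ onOrbits.
have nzX := positive_pluck_neq0 X posX.
have S1 : agree_dist X Y 1.
  by apply: agree_dist_of_orbit => [|i j ij O1]; [lia | apply: onOrbits; [| left]].
have Sd : agree_dist X Y d.
  by apply: agree_dist_of_orbit => [|i j ij Od]; [lia | apply: onOrbits; [| right]].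
have Sd1 : agree_dist X Y d.+1.
  rewrite (_ : d.+1 = d.*2.+1 - d)%N; last by lia.
  by apply: agree_dist_compl => //; lia.
have dS_lt : (d.+1 < d.*2.+1)%N by lia.
have n_le : (d.*2.+1 <= d.+1.*2)%N by lia.
have samePl := pluck_agree_of_dist X Y d.+1 n_le (agree_dist_upto X Y nzX d dS_lt S1 Sd Sd1).
have one_lt : (1 < d.*2.+1)%N by lia.
apply: (@eqmx_of_pluck _ _ X Y ord0 (Ordinal one_lt)) => //.
by rewrite lt0r_neq0 ?posX.
Qed.
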